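(* Let $0\le \ell<k$ be integers and $\gamma\ge 0$ a real number. If a $k$-graph $G$ with $m$ vertices and $e>0$ edges satisfies $\delta^+_\ell(G)\ge \gamma m^{k-\ell}/(k-\ell)!$, then $e\ge \gamma^{k/(k-\ell)} m^k/k!$.
   Context: A $k$-graph $G$ is a pair $(V(G),E(G))$ with $E(G)$ a collection of $k$-subsets of the finite set $V(G)$. The minimum positive $\ell$-degree $\delta^+_\ell(G)$ of a $k$-graph $G$ with at least one edge is the maximum $m$ such that every $\ell$-subset of $V(G)$ is contained in either no edges or at least $m$ edges of $G$. *)

From mathcomp Require Import all_boot all_order all_algebra.
From mathcomp Require Import reals exp.
Set Implicit Arguments. Unset Strict Implicit. Unset Printing Implicit Defensive.

Definition is_kgraph (T : finType) (k : nat) (E : {set {set T}}) : bool :=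
  [forall e in E, #|e| == k].

Definition deg (T : finType) (E : {set {set T}}) (S : {set T}) : nat :=
  #|[set e in E | S \subset e]|.

(* Minimum positive l-degree: the maximum d such that every l-subset of T
   lies in either no edge or at least d edges. Such d is at most #|E| whenever
   E has an edge (l <= k), so the max ranges over d <= #|E|. *)
Definition minposdeg (T : finType) (l : nat) (E : {set {set T}}) : nat :=
  \max_(d < #|E|.+1 | [forall S : {set T},
       (#|S| == l) ==> (deg E S == 0) || (d <= deg E S)]) d.

From mathcomp Require Import all_boot all_order all_algebra.
From mathcomp Require Import reals exp.
Set Implicit Arguments.
Unset Strict Implicit.
Unset Printing Implicit Defensive.
Import Order.TTheory GRing.Theory Num.Theory.

(* Put x := gamma^(1/(k-l)) m, so that x^(k-l) <= (k-l)! d for the minimum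
   positive l-degree d; we show x^k <= k! e by induction on l.  For l = 0 the
   empty set has degree e >= d.  For l > 0, a positive l-set S lies in at most
   C(n, k-l) edges, n being the number of non-isolated vertices, which forces
   x <= n; and the link of each non-isolated vertex v is a (k-1)-graph with
   deg v edges and minimum positive (l-1)-degree still >= d, so by induction
   x^(k-1) <= (k-1)! deg v.  Summing over the n non-isolated vertices gives
   x^k <= n x^(k-1) <= (k-1)! sum_v deg v = k! e. *)

Lemma ffact_leq_expn n m : n ^_ m <= n ^ m.
Proof.
by elim: m => [|m IH] //; rewrite ffactnSr expnSr leq_mul ?leq_subr.
Qed.

Section KGraphs.
Variable T : finType.
Implicit Types (E : {set {set T}}) (S e : {set T}) (v : T).

Definition posdeg_lb l E d : Prop :=
  forall S, #|S| = l -> deg E S = 0 \/ d <= deg E S.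

Lemma posdeg_lb_minposdeg l E : posdeg_lb l E (minposdeg l E).
Proof.
move=> S cS.
pose P n := forall S, #|S| = l -> (deg E S == 0) || (n <= deg E S).
suff /(_ S cS) /orP[/eqP | ] : P (minposdeg l E); [by left | by right | ].
apply: big_ind => [S' _ | a b Pa Pb S' cS' | i /forallP PS S' cS'].
- by rewrite orbT.
- case/orP: (Pa S' cS') => [-> // | ha]; case/orP: (Pb S' cS') => [-> // | hb].
  by rewrite geq_max ha hb orbT.
- by apply: (implyP (PS S')); rewrite cS'.
Qed.

Lemma kgraph_card E k e : is_kgraph k E -> e \in E -> #|e| = k.
Proof. by move=> /forallP/(_ e) /implyP PE /PE /eqP. Qed.

Lemma deg_set0 E : deg E set0 = #|E|.
Proof. by apply: eq_card => e; rewrite !inE sub0set andbT. Qed.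

Lemma deg1_gt0 E v : (0 < deg E [set v]) = (v \in cover E).
Proof.
rewrite card_gt0; apply/set0Pn/bigcupP => [[e] | [e eE ve]].
  by rewrite !inE sub1set => /andP[eE ve]; exists e.
by exists e; rewrite !inE sub1set eE.
Qed.

Lemma sum_deg1 E k : is_kgraph k E -> \sum_v deg E [set v] = k * #|E|.
Proof.
move=> kE; rewrite mulnC -sum_nat_const.
under eq_bigr => v _ do rewrite /deg -sum1_card.
rewrite (exchange_big_dep (mem E)) => [|v e _]; last by rewrite inE => /andP[].
apply: eq_bigr => e eE; rewrite -(kgraph_card kE eE) -sum1_card.
by apply: eq_bigl => v; rewrite !inE sub1set (eE : e \in E).
Qed.

Lemma deg_leq_bin_cover E k S :
  is_kgraph k E -> deg E S <= 'C(#|cover E|, k - #|S|).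
Proof.
move=> kE; rewrite -cards_draws /deg.
have injD : {in [set e in E | S \subset e] &, injective (fun e => e :\: S)}.
  move=> e1 e2; rewrite !inE => /andP[_ S1] /andP[_ S2] /= eqD.
  by rewrite -(setID e1 S) -(setID e2 S) eqD (setIidPr S1) (setIidPr S2).
rewrite -(card_in_imset injD); apply/subset_leq_card/subsetP => D /imsetP[e].
rewrite inE => /andP[eE Se] ->; rewrite inE.
rewrite (subset_trans (subsetDl _ _) (bigcup_sup _ eE)) cardsDS //.
by rewrite (kgraph_card kE eE) eqxx.
Qed.

Lemma exists_deg_gt0 E k s :
  is_kgraph k E -> E != set0 -> s <= k -> exists S, #|S| = s /\ 0 < deg E S.
Proof.
move=> kE /set0Pn[e eE] sk.
have : 0 < #|[set S : {set T} | S \subset e & #|S| == s]|.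
  by rewrite cards_draws bin_gt0 (kgraph_card kE eE).
case/card_gt0P => S; rewrite inE => /andP[Se /eqP cS]; exists S; split=> //.
by apply/card_gt0P; exists e; rewrite inE eE.
Qed.

Lemma posdeg_lb_cover_expn E k l d : is_kgraph k E -> E != set0 -> l <= k ->
  posdeg_lb l E d -> (k - l)`! * d <= #|cover E| ^ (k - l).
Proof.
move=> kE En0 lk lbE; have [S [cS degS]] := exists_deg_gt0 kE En0 lk.
have [S0 | dS] := lbE S cS; first by rewrite S0 in degS.
apply: leq_trans (ffact_leq_expn _ _); rewrite -bin_ffact mulnC leq_mul2r.
by rewrite (leq_trans dS) ?orbT // -cS deg_leq_bin_cover.
Qed.

Definition link E v : {set {set T}} := [set e :\ v | e in E & v \in e].

Lemma setD1_inj v :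
  {in [pred e : {set T} | v \in e] &, injective (fun e => e :\ v)}.
Proof. by move=> e1 e2 v1 v2 /= eqD; rewrite -(setD1K v1) -(setD1K v2) eqD. Qed.

Lemma card_link E v : #|link E v| = deg E [set v].
Proof.
rewrite card_in_imset => [|e1 e2].
  by apply: eq_card => e; rewrite !inE sub1set.
by rewrite !inE => /andP[_ v1] /andP[_ v2]; apply: setD1_inj.
Qed.

Lemma link_kgraph E k v : is_kgraph k.+1 E -> is_kgraph k (link E v).
Proof.
move=> kE; apply/forallP => D; apply/implyP => /imsetP[e].
rewrite inE => /andP[eE ve] ->.
by have := cardsD1 v e; rewrite ve (kgraph_card kE eE) add1n => -[<-].
Qed.

Lemma deg_link_mem E v S : v \in S -> deg (link E v) S = 0.
Proof.
move=> vS; apply/eqP; rewrite cards_eq0; apply/eqP/setP => D; rewrite !inE.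
apply/negbTE/andP => -[/imsetP[e _ ->] /subsetP/(_ v vS)].
by rewrite !inE eqxx.
Qed.

Lemma deg_link E v S : v \notin S -> deg (link E v) S = deg E (v |: S).
Proof.
move=> vS; rewrite /deg.
have -> : [set f in link E v | S \subset f]
          = [set e :\ v | e in E & v |: S \subset e].
  apply/setP => f; rewrite inE; apply/andP/imsetP => [[/imsetP[e]] | [e]].
    rewrite inE => /andP[eE ve] -> Sf; exists e => //.
    by rewrite inE eE subUset sub1set ve (subset_trans Sf (subD1set _ _)).
  rewrite inE subUset sub1set => /andP[eE /andP[ve Se]] ->; split.
    by apply: imset_f; rewrite inE eE.
  by rewrite subsetD1 Se.
rewrite card_in_imset // => e1 e2; rewrite !inE !subUset !sub1set.
by case/andP=> _ /andP[v1 _] /andP[_ /andP[v2 _]]; apply: setD1_inj.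
Qed.

Lemma posdeg_lb_link l E d v :
  posdeg_lb l.+1 E d -> posdeg_lb l (link E v) d.
Proof.
move=> lbE S cS; have [vS | vS] := boolP (v \in S).
  by left; apply: deg_link_mem.
by rewrite deg_link //; apply: lbE; rewrite cardsU1 vS cS.
Qed.

End KGraphs.

Local Open Scope ring_scope.

Section EdgeCountBound.
Variables (R : realType) (T : finType) (r d : nat) (x : R).
Hypotheses (r_gt0 : (0 < r)%N) (x_ge0 : 0 <= x).
Hypothesis x_bound : x ^+ r <= (r`! * d)%:R.
Implicit Type E : {set {set T}}.

Lemma posdeg_lb_cover_ge l E : is_kgraph (l + r) E -> E != set0 ->
  posdeg_lb l E d -> x <= #|cover E|%:R.
Proof.
move=> kE En0 lbE; rewrite -(ler_pXn2r r_gt0) ?nnegrE //.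
apply: le_trans x_bound _; rewrite -natrX ler_nat.
by have := posdeg_lb_cover_expn kE En0 (leq_addr r l) lbE; rewrite addKn.
Qed.

Lemma posdeg_lb_card_ge l E : is_kgraph (l + r) E -> E != set0 ->
  posdeg_lb l E d -> x ^+ (l + r) <= ((l + r)`! * #|E|)%:R.
Proof.
elim: l E => [|l IH] E kE En0 lbE.
  apply: le_trans x_bound _; rewrite ler_nat leq_mul2l -deg_set0.
  have [E0 | ->] := lbE set0 (cards0 _); last by rewrite orbT.
  by move: En0; rewrite -card_gt0 -deg_set0 E0.
have x_le := posdeg_lb_cover_ge kE En0 lbE.
rewrite addSn in kE *.
have link_ge v :
    v \in cover E -> x ^+ (l + r) <= ((l + r)`! * deg E [set v])%:R.
  move=> vE; rewrite -card_link; apply: IH.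
  - exact: link_kgraph.
  - by rewrite -card_gt0 card_link deg1_gt0.
  - exact: posdeg_lb_link.
have sum_ge :
    #|cover E|%:R * x ^+ (l + r) <= ((l + r)`! * ((l + r).+1 * #|E|))%:R.
  rewrite mulr_natl -sumr_const; apply: le_trans (ler_sum _ link_ge) _.
  rewrite -natr_sum ler_nat -big_distrr /= leq_mul2l -(sum_deg1 kE).
  by rewrite [leqRHS](bigID (mem (cover E))) /= leq_addr orbT.
rewrite factS exprS -mulnA mulnCA.
exact: le_trans (ler_wpM2r (exprn_ge0 _ x_ge0) x_le) sum_ge.
Qed.

End EdgeCountBound.

Theorem lemma2p1 (R : realType) (T : finType) (E : {set {set T}})
  (k l : nat) (gamma : R) :
  (l < k)%N -> 0 <= gamma -> is_kgraph k E -> E != set0 ->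
  gamma * (#|T|%:R ^+ (k - l)) / ((k - l)`!)%:R <= (minposdeg l E)%:R ->
  powR gamma (k%:R / (k - l)%:R) * (#|T|%:R ^+ k) / (k`!)%:R <= #|E|%:R.
Proof.
move=> lk gamma_ge0 kE En0 deg_ge.
set r := (k - l)%N; have r_gt0 : (0 < r)%N by rewrite subn_gt0.
have k_eq : k = (l + r)%N by rewrite subnKC // ltnW.
have r_neq0 : r%:R != 0 :> R by rewrite pnatr_eq0 -lt0n.
have [y y_ge0 yr] : exists2 y : R, 0 <= y & y ^+ r = gamma.
  exists (gamma `^ r%:R^-1); first exact: powR_ge0.
  by rewrite -powR_mulrn ?powR_ge0 // -powRrM mulVf // powRr1.
have yk : gamma `^ (k%:R / r%:R) = y ^+ k.
  by rewrite -yr -powR_mulrn // -powRrM mulrCA mulfV // mulr1 powR_mulrn.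
have x_ge0 : 0 <= y * #|T|%:R by rewrite mulr_ge0.
have x_bound : (y * #|T|%:R) ^+ r <= (r`! * minposdeg l E)%:R.
  move: deg_ge; rewrite ler_pdivrMr ?ltr0n ?fact_gt0 //.
  by rewrite exprMn yr natrM (mulrC r`!%:R).
rewrite yk ler_pdivrMr ?ltr0n ?fact_gt0 // -exprMn -natrM mulnC k_eq.
rewrite k_eq in kE.
apply: (posdeg_lb_card_ge r_gt0 x_ge0 x_bound kE En0).
exact: posdeg_lb_minposdeg.
Qed.
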